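(* For any set $\mathcal H$ of Pauli operators in $\mathcal P_n$, $\mathrm{rank}\,D^{(\mathcal H)}=\mathrm{rank}\,A^{(\mathcal H)}$.
   Context: $\mathcal P_n$ is the $n$-qubit Pauli group without phases; $\langle A,B\rangle=0$ if $A,B$ commute and $1$ otherwise. $\Gamma$ is a finite collection of supports $\gamma\subseteq\{1,\dots,n\}$; $\mathcal E_\gamma$ is the set of non-identity Paulis supported in $\gamma$, and $\mathcal E_\Gamma$ is the disjoint union of the $\mathcal E_\gamma$ (each element $e$ labeled by its support $\gamma_e$). For $h\in\mathcal P_n$, $h_\gamma$ is the restriction of $h$ to $\gamma$ (identity outside $\gamma$). $A^{(\mathcal H)}$ is the $|\mathcal H|\times|\mathcal E_\Gamma|$ matrix with $A^{(\mathcal H)}[h,e]=1$ if $h_{\gamma_e}=e$ and $0$ otherwise. $D^{(\mathcal H)}$ is the $|\mathcal H|\times|\mathcal E_\Gamma|$ matrix with $D^{(\mathcal H)}[h,e]=\langle h,e\rangle$. *)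

From HB Require Import structures.
From mathcomp Require Import all_boot all_order all_algebra.
Set Implicit Arguments. Unset Strict Implicit. Unset Printing Implicit Defensive.
Import GRing.Theory Num.Theory.
Local Open Scope ring_scope.

(* Single-qubit Pauli without phase, in symplectic (x,z) representation:
   I = (false,false), X = (true,false), Z = (false,true), Y = (true,true). *)
Definition pauliI : bool * bool := (false, false).

Definition Pauli (n : nat) := {ffun 'I_n -> bool * bool}.

Definition pauli_id (n : nat) : Pauli n := [ffun => pauliI].

Definition anticomm1 (a b : bool * bool) : bool := (a.1 && b.2) (+) (a.2 && b.1).

(* <A,B> = 0 if A and B commute, 1 otherwise *)
Definition symp (n : nat) (A B : Pauli n) : bool :=
  \big[addb/false]_(i < n) anticomm1 (A i) (B i).

Definition supp (n : nat) (p : Pauli n) : {set 'I_n} := [set i | p i != pauliI].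

Definition restrict (n : nat) (g : {set 'I_n}) (h : Pauli n) : Pauli n :=
  [ffun i => if i \in g then h i else pauliI].

Definition Egamma (n : nat) (g : {set 'I_n}) : {set Pauli n} :=
  [set p | (p != pauli_id n) && (supp p \subset g)].

(* E_Gamma : disjoint union of the E_gamma, each element labelled (gamma_e, e) *)
Definition EGamma (n : nat) (G : {set {set 'I_n}}) : {set {set 'I_n} * Pauli n} :=
  [set e | (e.1 \in G) && (e.2 \in Egamma e.1)].

Definition Amx (R : numFieldType) (n : nat) (G : {set {set 'I_n}}) (H : {set Pauli n})
  : 'M[R]_(#|H|, #|EGamma G|) :=
  \matrix_(i < #|H|, j < #|EGamma G|)
     (let h := enum_val i in let e := enum_val j in
      (restrict e.1 h == e.2)%:R).

Definition Dmx (R : numFieldType) (n : nat) (G : {set {set 'I_n}}) (H : {set Pauli n})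
  : 'M[R]_(#|H|, #|EGamma G|) :=
  \matrix_(i < #|H|, j < #|EGamma G|)
     (let h := enum_val i in let e := enum_val j in
      (symp h e.2)%:R).

(* Since [<h, e> = <h_gamma, e>] for [e] supported in [gamma], and [<I, e> = 0],
   D factors as [D = A B], where [B] is block diagonal with one block
   [[<p, e>]]_(p, e in E_gamma) for each [gamma].  Each block is invertible: with
   [<p, e> = (1 - (-1)^<p, e>) / 2], the characters [e |-> (-1)^<p, e>] of the
   group of Paulis supported in [gamma] are orthogonal, so pairing a kernel
   relation with [(-1)^<q, .>] isolates the [q]-th coefficient.  Hence [B] has
   full row rank and [rank (A B) = rank A]. *)

From mathcomp Require Import all_boot all_order all_algebra.
From mathcomp Require Import ring.
Set Implicit Arguments. Unset Strict Implicit. Unset Printing Implicit Defensive.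
Import GRing.Theory Num.Theory.
Local Open Scope ring_scope.

Section PauliSymplectic.
Variable n : nat.
Implicit Types (p q e u : Pauli n) (g : {set 'I_n}).

Lemma oppr_pauli p : - p = p.
Proof. by apply/ffunP => i; rewrite ffunE; case: (p i). Qed.

Lemma addr_pauli_eq0 p q : (p + q == 0) = (p == q).
Proof. by rewrite addr_eq0 oppr_pauli. Qed.

Lemma anticomm1Dl a b c : anticomm1 (a + b) c = anticomm1 a c (+) anticomm1 b c.
Proof. by case: a b c => [[] []] [[] []] [[] []]. Qed.

Lemma anticomm1C a b : anticomm1 a b = anticomm1 b a.
Proof. by case: a b => [[] []] [[] []]. Qed.

Lemma anticomm10 a : anticomm1 a pauliI = false.
Proof. by case: a => [[] []]. Qed.

Lemma sympC p q : symp p q = symp q p.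
Proof. by apply: eq_bigr => i _; rewrite anticomm1C. Qed.

Lemma symp_addl p q e : symp (p + q) e = symp p e (+) symp q e.
Proof. by rewrite /symp -big_split; apply: eq_bigr => i _; rewrite ffunE anticomm1Dl. Qed.

Lemma symp0r p : symp p 0 = false.
Proof. by rewrite /symp big1 // => i _; rewrite ffunE anticomm10. Qed.

Lemma symp0l p : symp 0 p = false.
Proof. by rewrite sympC symp0r. Qed.

Definition pauli_on g : {set Pauli n} := [set p | supp p \subset g].

Lemma mem0_pauli_on g : 0 \in pauli_on g.
Proof. by rewrite inE; apply/subsetP => i; rewrite inE ffunE eqxx. Qed.

Lemma EgammaE g : Egamma g = pauli_on g :\ (0 : Pauli n).
Proof. by apply/setP => p; rewrite !inE. Qed.

Lemma pauli_onD g p q : p \in pauli_on g -> q \in pauli_on g -> p + q \in pauli_on g.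
Proof.
rewrite !inE => /subsetP sp /subsetP sq; apply/subsetP => i; rewrite inE ffunE.
case: (boolP (i \in supp p)) => [/sp //|]; rewrite inE negbK => /eqP ->.
by case: (boolP (i \in supp q)) => [/sq //|]; rewrite inE negbK => /eqP ->.
Qed.

Lemma restrict_pauli_on g p : restrict g p \in pauli_on g.
Proof. by rewrite inE; apply/subsetP => i; rewrite inE ffunE; case: ifP; rewrite ?eqxx. Qed.

Lemma symp_restrict g p e : e \in pauli_on g -> symp (restrict g p) e = symp p e.
Proof.
rewrite inE => /subsetP sub; apply: eq_bigr => i _; rewrite ffunE.
case: ifP => // ig; have : i \notin supp e by apply: contraFN ig => /sub.
by rewrite inE negbK => /eqP ->; rewrite !anticomm10.
Qed.

(* The witness is [Z] or [X] at a site where [p] acts nontrivially. *)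
Lemma exists_anticomm g p : p \in Egamma g -> exists2 u, u \in pauli_on g & symp p u.
Proof.
rewrite inE => /andP [p_neq0 p_on].
have [i p_i] : exists i, p i != pauliI.
  apply/existsP; apply: contraR p_neq0 => /existsPn p_triv.
  by apply/eqP/ffunP => i; rewrite ffunE; apply/eqP/negbNE.
pose t : bool * bool := if (p i).1 then (false, true) else (true, false).
exists [ffun j => if j == i then t else pauliI].
  rewrite inE; apply/subsetP => j; rewrite inE ffunE.
  by case: (eqVneq j i) => [-> _|_]; rewrite ?eqxx // (subsetP p_on) // inE.
rewrite /symp (bigD1 i) //= big1 => [|j /negbTE j_i]; last by rewrite ffunE j_i anticomm10.
by rewrite ffunE eqxx /t; move: p_i; case: (p i) => [[] []].
Qed.

End PauliSymplectic.

Section Characters.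
Variables (R : numDomainType) (n : nat).
Implicit Types (p q e r : Pauli n) (g : {set 'I_n}).

Definition chi p e : R := (-1) ^+ symp p e.

Lemma chiC p e : chi p e = chi e p.
Proof. by rewrite /chi sympC. Qed.

Lemma chiDl p q e : chi (p + q) e = chi p e * chi q e.
Proof. by rewrite /chi symp_addl signr_addb. Qed.

Lemma sum_chi g r : r \in pauli_on g ->
  \sum_(e in pauli_on g) chi r e = (r == 0)%:R * #|pauli_on g|%:R.
Proof.
move=> r_on; have [->|r_neq0] := eqVneq r 0.
  by rewrite mul1r -sum1_card natr_sum; apply: eq_bigr => e _; rewrite /chi symp0l.
have [u u_on r_u] : exists2 u, u \in pauli_on g & symp r u.
  by apply: exists_anticomm; rewrite EgammaE in_setD1 r_neq0.
rewrite mul0r; set s := \sum_(e in _) _.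
(* Translation by [u] permutes [pauli_on g] and flips the sign of [chi r]. *)
suff : s = - s by move/eqP; rewrite -subr_eq0 opprK -mulr2n mulrn_eq0 => /eqP.
rewrite {1}/s (reindex_inj (addIr u)) /= -sumrN; apply: eq_big => [e|e _].
  apply/idP/idP => [/pauli_onD/(_ u_on)|/pauli_onD->//].
  by rewrite -{2}[u]oppr_pauli addrK.
by rewrite chiC chiDl !(chiC _ r) /chi r_u expr1 mulrN1.
Qed.

Lemma Egamma_symp_nondeg g (f : Pauli n -> R) :
  (forall e, e \in Egamma g -> \sum_(p in Egamma g) f p * (symp p e)%:R = 0) ->
  forall q, q \in Egamma g -> f q = 0.
Proof.
move=> f_ker q q_E; set N := #|pauli_on g|.
have /andP [q_neq0 q_on] : (q != 0) && (q \in pauli_on g) by rewrite -in_setD1 -EgammaE.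
have {}f_ker e : e \in pauli_on g -> \sum_(p in Egamma g) f p * (symp p e)%:R = 0.
  move=> e_on; have [->|e_neq0] := eqVneq e 0.
    by rewrite big1 // => p _; rewrite symp0r mulr0.
  by apply: f_ker; rewrite EgammaE in_setD1 e_neq0.
have symp_chi p e : (symp p e)%:R *+ 2 = 1 - chi p e.
  by rewrite /chi signrE subKr -muln2 natrM mulr_natr.
have sum_chi_diff p : p \in Egamma g ->
    \sum_(e in pauli_on g) (chi q e - chi (p + q) e) = - ((p == q)%:R * N%:R).
  rewrite EgammaE in_setD1 => /andP [_ p_on].
  by rewrite sumrB !sum_chi ?pauli_onD // addr_pauli_eq0 (negbTE q_neq0) mul0r sub0r.
(* Fourier inversion: pairing the relations with [chi q], only [p = q] survives. *)
have inversion :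
    \sum_(e in pauli_on g) (chi q e * \sum_(p in Egamma g) f p * (symp p e)%:R) *+ 2
    = - (f q * N%:R).
  rewrite (eq_bigr (fun e => \sum_(p in Egamma g) f p * (chi q e - chi (p + q) e))) => [|e _].
    rewrite exchange_big /= (eq_bigr (fun p => - (f p * ((p == q)%:R * N%:R)))) => [|p p_E].
      rewrite sumrN (bigD1 q) //= big1 ?eqxx ?mul1r ?addr0 // => p /andP [_ /negbTE ->].
      by rewrite mul0r mulr0.
    by rewrite -mulr_sumr sum_chi_diff // mulrN.
  rewrite -mulrnAr -sumrMnl mulr_sumr; apply: eq_bigr => p _.
  by rewrite -mulrnAr symp_chi chiDl; ring.
have N_gt0 : (0 < N)%N by apply/card_gt0P; exists 0; exact: mem0_pauli_on.
move: inversion; rewrite big1 => [/esym/eqP|e /f_ker ->]; last by rewrite mulr0 mul0rn.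
by rewrite oppr_eq0 mulf_eq0 pnatr_eq0 eqn0Ngt N_gt0 orbF => /eqP.
Qed.

End Characters.

Section SetMatrices.
Variable R : pzRingType.
Implicit Types T U V : finType.

Definition setmx T U (A : {set T}) (B : {set U}) (F : T -> U -> R) : 'M[R]_(#|A|, #|B|) :=
  \matrix_(i < #|A|, j < #|B|) F (enum_val i) (enum_val j).

Lemma eq_in_setmx T U (A : {set T}) (B : {set U}) (F F' : T -> U -> R) :
  {in A & B, F =2 F'} -> setmx A B F = setmx A B F'.
Proof. by move=> eqF; apply/matrixP => i j; rewrite !mxE eqF ?enum_valP. Qed.

Lemma mul_setmx T U V (A : {set T}) (B : {set U}) (C : {set V}) F K :
  setmx A B F *m setmx B C K = setmx A C (fun a c => \sum_(b in B) F a b * K b c).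
Proof.
by apply/matrixP => i j; rewrite !mxE [RHS]big_enum_val; apply: eq_bigr => k _; rewrite !mxE.
Qed.

End SetMatrices.

Lemma row_free_setmx (R : fieldType) (T : finType) (A : {set T}) (K : T -> T -> R) :
  (forall f : T -> R,
     {in A, forall y, \sum_(x in A) f x * K x y = 0} -> {in A, forall x, f x = 0}) ->
  row_free (setmx A A K).
Proof.
move=> K_nondeg; apply: inj_row_free => v vK0; apply/rowP => i; rewrite mxE.
pose f x := v 0 (enum_rank_in (enum_valP i) x).
have fE j : f (enum_val j) = v 0 j by rewrite /f enum_valK_in.
rewrite -fE K_nondeg ?enum_valP // => y y_A.
rewrite big_enum_val -(enum_rankK_in (enum_valP i) y_A).
transitivity ((v *m setmx A A K) 0 (enum_rank_in (enum_valP i) y)); last by rewrite vK0 mxE.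
by rewrite mxE; apply: eq_bigr => k _; rewrite fE mxE.
Qed.

Section CommutationBlocks.
Variables (R : numFieldType) (n : nat) (G : {set {set 'I_n}}).

Lemma restrict_EGamma g h e : g \in G -> e \in pauli_on g -> symp h e ->
  (g, restrict g h) \in EGamma G.
Proof.
move=> g_G e_on h_e; rewrite inE /= g_G EgammaE in_setD1 restrict_pauli_on andbT.
by apply: contraTneq h_e => h_g0; rewrite -(symp_restrict h e_on) h_g0 symp0l.
Qed.

Lemma big_EGamma_fiber (F : {set 'I_n} * Pauli n -> R) g : g \in G ->
  \sum_(x in EGamma G | x.1 == g) F x = \sum_(p in Egamma g) F (g, p).
Proof.
move=> g_G; transitivity (\sum_(s | s == g) \sum_(p in Egamma s) F (s, p)); last first.
  by rewrite big_pred1_eq.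
rewrite pair_big_dep.
apply: eq_big => [[s p]|[s p] _] //=; rewrite inE /=.
by case: eqVneq => [->|]; rewrite ?g_G ?andbF ?andbT.
Qed.

Definition block_symp : 'M[R]_(#|EGamma G|, #|EGamma G|) :=
  setmx (EGamma G) (EGamma G) (fun x y => ((x.1 == y.1) && symp x.2 y.2)%:R).

Lemma Dmx_factor H : Dmx R G H = Amx R G H *m block_symp.
Proof.
have -> : Dmx R G H = setmx H (EGamma G) (fun h e => (symp h e.2)%:R) by [].
have -> : Amx R G H = setmx H (EGamma G) (fun h e => (restrict e.1 h == e.2)%:R) by [].
rewrite mul_setmx; apply: eq_in_setmx => h [g e] _; rewrite inE /= => /andP [g_G].
rewrite EgammaE in_setD1 => /andP [_ e_on].
rewrite (eq_bigr (fun x => ((x == (g, restrict g h)) && symp h e)%:R)) => [|[s p] _]; last first.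
  rewrite -natrM mulnb xpair_eqE /=; have [-> | s_ne] := eqVneq s g; last by rewrite !andbF.
  by rewrite eq_sym /=; case: eqVneq => [->|_]; rewrite ?symp_restrict.
have [h_e|h_e] := boolP (symp h e); last by rewrite big1 // => x _; rewrite andbF.
rewrite (bigD1 (g, restrict g h)) ?(restrict_EGamma g_G e_on) //= eqxx big1 ?addr0 //.
by move=> x /andP [_ /negbTE ->].
Qed.

Lemma row_free_block_symp : row_free block_symp.
Proof.
apply: row_free_setmx => f f_ker [g q]; rewrite inE /= => /andP [g_G q_E].
apply: (Egamma_symp_nondeg (f := fun p => f (g, p))) q_E => e e_E.
rewrite -[RHS](f_ker (g, e)); last by rewrite inE /= g_G.
rewrite (bigID (fun x => x.1 == g)) /= [X in _ + X]big1 ?addr0 => [|x /andP [_ /negbTE ->]].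
  by rewrite big_EGamma_fiber //; apply: eq_bigr => p _; rewrite eqxx.
by rewrite mulr0.
Qed.

End CommutationBlocks.

Theorem lemma2 (R : numFieldType) (n : nat) (G : {set {set 'I_n}}) (H : {set Pauli n}) :
  \rank (Dmx R G H) = \rank (Amx R G H).
Proof. by rewrite Dmx_factor mxrankMfree // row_free_block_symp. Qed.
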